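(* Let $n\ge2$. An algebra has a strong $n$-cube term if and only if it has a Mal'cev term.
   Context: A Mal'cev term is a ternary term $q$ such that $q(x,x,y)\approx y\approx q(y,x,x)$ holds. For $k\ge0$, $k_{(i)}$ denotes the $i$-th binary digit of $k$ (least significant is $i=0$). For $i<n$ let $\rho_i\colon\{0,\dots,2^n-1\}\to\{0,\dots,2^n-1\}$ map $k$ to the number obtained from $k$ by setting its $i$-th binary digit to $0$. A strong $n$-cube term is a $(2^n-1)$-ary term $q_n$ such that, for each $i<n$, the algebra satisfies the identity $q_n(y_{\rho_i(0)},y_{\rho_i(1)},\dots,y_{\rho_i(2^n-2)})\approx y_{\rho_i(2^n-1)}$ (i.e. $q_n(x_0,\dots,x_{2^n-2})=x_{2^n-1}$ whenever $x_k=x_l$ for all $k,l<2^n$ differing only in the $i$-th binary digit). For $n=2$ these identities are $q_2(x,y,x)\approx y$ and $q_2(x,x,y)\approx y$. *)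

From mathcomp Require Import all_boot.
Set Implicit Arguments. Unset Strict Implicit. Unset Printing Implicit Defensive.

Section UA.
Variables (F : Type) (ar : F -> nat).

Inductive term (V : Type) : Type :=
  | Var : V -> term V
  | App : forall f : F, ('I_(ar f) -> term V) -> term V.

Variables (A : Type) (op : forall f : F, ('I_(ar f) -> A) -> A).

Fixpoint eval (V : Type) (e : V -> A) (t : term V) : A :=
  match t with
  | Var v => e v
  | App f ts => op (fun i => eval e (ts i))
  end.

Definition malcev_term (q : term 'I_3) : Prop :=
  forall x y : A,
    eval (fun k : 'I_3 => nth x [:: x; x; y] k) q = y /\
    eval (fun k : 'I_3 => nth x [:: y; x; x] k) q = y.

(* rho i k : k with its i-th binary digit set to 0. *)
Definition rho (i k : nat) : nat := k - (odd (k %/ 2 ^ i)) * 2 ^ i.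

Definition strong_cube_term (n : nat) (q : term 'I_(2 ^ n - 1)) : Prop :=
  forall i : nat, i < n ->
    forall y : nat -> A,
      eval (fun k : 'I_(2 ^ n - 1) => y (rho i k)) q = y (rho i (2 ^ n - 1)).

End UA.

From mathcomp Require Import all_boot zify.
From Stdlib Require Import FunctionalExtensionality.
Set Implicit Arguments. Unset Strict Implicit. Unset Printing Implicit Defensive.

(* A Mal'cev term p yields strong cube terms recursively: q_1(x_0) = x_0 and
   q_(m+1)(x) = p(q_m(upper half of x), q_m(lower half of x), x_(2^m - 1)),
   the variable x_(2^m - 1) sitting between the two halves. For a digit i < m
   both halves satisfy the i-th identity and the last two arguments of p
   agree, so p(y, x, x) = y gives the identity; for the top digit i = m the two
   halves agree and p(x, x, y) = y gives it.
   Conversely, the i-th identity of a strong n-cube term q, with all variables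
   set to x except z at position 2^n - 1 - 2^i, says q(x, .., x, z, x, .., x) = z.
   Keeping positions 2^n - 3 and 2^n - 2 as the outer arguments and merging all
   other positions into the middle one, the identities for i = 1 and i = 0
   make q a Mal'cev term. *)

Lemma expn_split i n : i <= n -> 2 ^ n = 2 ^ (n - i) * 2 ^ i.
Proof. by move=> le_in; rewrite -expnD subnK. Qed.

Lemma odd_exp2_sub i n : i < n -> odd (2 ^ (n - i)) = false.
Proof. by move=> lt_in; rewrite oddX subn_eq0 leqNgt lt_in. Qed.

Lemma rho_mulD i m r : r < 2 ^ i -> rho i (m * 2 ^ i + r) = m * 2 ^ i + r - odd m * 2 ^ i.
Proof. by move=> lt_r; rewrite /rho divnMDl ?expn_gt0 // divn_small ?addn0. Qed.

Lemma rho_small i k : k < 2 ^ i -> rho i k = k.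
Proof. by move=> lt_k; rewrite /rho divn_small // mul0n subn0. Qed.

Lemma rho_expD i k : k < 2 ^ i -> rho i (2 ^ i + k) = k.
Proof. by move=> lt_k; rewrite -{1}[2 ^ i]mul1n rho_mulD // mul1n addKn. Qed.

Lemma rho_expDl i n k : i < n -> rho i (2 ^ n + k) = 2 ^ n + rho i k.
Proof.
move=> lt_in; have pos_i : 0 < 2 ^ i by rewrite expn_gt0.
have lt_r : k %% 2 ^ i < 2 ^ i by rewrite ltn_mod.
have le_odd : odd (k %/ 2 ^ i) <= k %/ 2 ^ i.
  by case: (k %/ 2 ^ i) => // q /=; case: (odd q).
rewrite {1 2}(divn_eq k (2 ^ i)) (expn_split (ltnW lt_in)) addnA -mulnDl.
rewrite !rho_mulD // oddD odd_exp2_sub // addFb mulnDl -addnA addnBA //.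
exact: leq_trans (leq_mul le_odd (leqnn _)) (leq_addr _ _).
Qed.

Lemma rho_top i n : i < n -> rho i (2 ^ n - 1) = 2 ^ n - 1 - 2 ^ i.
Proof.
move=> lt_in; have pos_i : 0 < 2 ^ i by rewrite expn_gt0.
have gt_ni : 2 ^ i < 2 ^ n by rewrite ltn_exp2l.
have E : 2 ^ n - 1 = (2 ^ (n - i) - 1) * 2 ^ i + (2 ^ i - 1).
  by rewrite mulnBl mul1n -expn_split; [lia | exact: ltnW].
rewrite {1}E rho_mulD; last by lia.
by rewrite oddB ?expn_gt0 // odd_exp2_sub // mul1n -E.
Qed.

Lemma rho_top_sub i n : i < n -> rho i (2 ^ n - 1 - 2 ^ i) = 2 ^ n - 1 - 2 ^ i.
Proof.
move=> lt_in; have pos_i : 0 < 2 ^ i by rewrite expn_gt0.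
have gt_ni : 2 ^ i < 2 ^ n by rewrite ltn_exp2l.
have le2_in : 2 * 2 ^ i <= 2 ^ n by rewrite -expnS leq_exp2l.
have E : 2 ^ n - 1 - 2 ^ i = (2 ^ (n - i) - 2) * 2 ^ i + (2 ^ i - 1).
  by rewrite mulnBl -expn_split; [lia | exact: ltnW].
rewrite {1}E rho_mulD; last by lia.
rewrite oddB; last by rewrite -{1}(expn1 2) leq_exp2l // subn_gt0.
by rewrite odd_exp2_sub // mul0n subn0 -E.
Qed.

Lemma rho_eq_top_sub i n k : i < n -> k < 2 ^ n - 1 ->
  (rho i k == 2 ^ n - 1 - 2 ^ i) = (k == 2 ^ n - 1 - 2 ^ i).
Proof.
move=> lt_in lt_k; have [->|ne_k] := eqVneq k (2 ^ n - 1 - 2 ^ i).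
  by rewrite rho_top_sub // eqxx.
apply/negbTE; rewrite /rho; case odd_k: (odd (k %/ 2 ^ i)); last by rewrite mul0n subn0.
have : 0 < k %/ 2 ^ i by case: (k %/ 2 ^ i) odd_k.
rewrite divn_gt0 ?expn_gt0 // mul1n => ge_k; apply/eqP; lia.
Qed.

Section Substitution.
Variables (F : Type) (ar : F -> nat).

Fixpoint tsubst (V W : Type) (s : V -> term ar W) (t : term ar V) : term ar W :=
  match t with
  | Var v => s v
  | App f ts => App (fun i => tsubst s (ts i))
  end.

Definition rename (V W : Type) (g : V -> W) (t : term ar V) : term ar W :=
  tsubst (fun v => Var ar (g v)) t.

Variables (A : Type) (op : forall f : F, ('I_(ar f) -> A) -> A).

Lemma eq_eval (V : Type) (e e' : V -> A) (t : term ar V) :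
  e =1 e' -> eval op e t = eval op e' t.
Proof.
move=> ee'; elim: t => [v|f ts IH] /=; first exact: ee'.
by congr op; apply: functional_extensionality => i.
Qed.

Lemma eval_tsubst (V W : Type) (s : V -> term ar W) (e : W -> A) (t : term ar V) :
  eval op e (tsubst s t) = eval op (fun v => eval op e (s v)) t.
Proof.
elim: t => [v|f ts IH] //=.
by congr op; apply: functional_extensionality => i.
Qed.

Lemma eval_rename (V W : Type) (g : V -> W) (e : W -> A) (t : term ar V) :
  eval op e (rename g t) = eval op (e \o g) t.
Proof. exact: eval_tsubst. Qed.

End Substitution.

Section CubeFromMalcev.
Variables (F : Type) (ar : F -> nat).
Variables (A : Type) (op : forall f : F, ('I_(ar f) -> A) -> A).
Variable p : term ar 'I_3.
Hypothesis malcev_p : malcev_term op p.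

Definition malcev_op (a b c : A) : A := eval op (fun k : 'I_3 => nth b [:: a; b; c] k) p.

Lemma malcev_opxxy x y : malcev_op x x y = y. Proof. by case: (malcev_p x y). Qed.
Lemma malcev_opyxx x y : malcev_op y x x = y. Proof. by case: (malcev_p x y). Qed.

(* [cube m] is the term q_(m+1) above, in the variables 0, ..., 2^(m+1) - 2. *)
Fixpoint cube (m : nat) : term ar nat :=
  match m with
  | 0 => Var ar 0
  | m'.+1 => tsubst (fun k : 'I_3 => nth (cube m')
       [:: rename (addn (2 ^ m'.+1)) (cube m'); cube m'; Var ar (2 ^ m'.+1 - 1)] k) p
  end.

Lemma eval_cubeS m (e : nat -> A) : eval op e (cube m.+1) =
  malcev_op (eval op (e \o addn (2 ^ m.+1)) (cube m)) (eval op e (cube m)) (e (2 ^ m.+1 - 1)).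
Proof.
rewrite eval_tsubst; apply: eq_eval => -[[|[|[|k]]] lt_k] //=.
by rewrite eval_rename.
Qed.

Lemma eq_eval_cube m (e e' : nat -> A) :
  (forall k, k < 2 ^ m.+1 - 1 -> e k = e' k) -> eval op e (cube m) = eval op e' (cube m).
Proof.
elim: m e e' => [|m IH] e e' ee'; first exact: ee'.
have pos_m : 0 < 2 ^ m.+1 by rewrite expn_gt0.
rewrite expnS mul2n -addnn in ee'.
rewrite !eval_cubeS; congr malcev_op.
- by apply: IH => k lt_k; apply: ee'; lia.
- by apply: IH => k lt_k; apply: ee'; lia.
- by apply: ee'; lia.
Qed.

Lemma cube_identity m i (y : nat -> A) : i <= m ->
  eval op (y \o rho i) (cube m) = y (rho i (2 ^ m.+1 - 1)).
Proof.
elim: m i y => [|m IH] i y; first by rewrite leqn0 => /eqP ->.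
have lt_top : 2 ^ m.+1 - 1 < 2 ^ m.+1 by rewrite subn1 ltn_predL expn_gt0.
have -> : 2 ^ m.+2 - 1 = 2 ^ m.+1 + (2 ^ m.+1 - 1) by rewrite expnS; lia.
rewrite eval_cubeS; case: (ltnP i m.+1) => [lt_im | le_mi] le_im.
- have -> : eval op ((y \o rho i) \o addn (2 ^ m.+1)) (cube m) =
            eval op ((y \o addn (2 ^ m.+1)) \o rho i) (cube m).
    by apply: eq_eval_cube => k _ /=; rewrite rho_expDl.
  by rewrite (IH i (y \o addn _)) // IH //= rho_expDl // malcev_opyxx.
- have ei : i = m.+1 by apply/eqP; rewrite eqn_leq le_im le_mi.
  subst i; rewrite /= rho_expD // rho_small //.
  have -> : eval op ((y \o rho m.+1) \o addn (2 ^ m.+1)) (cube m) = eval op y (cube m).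
    by apply: eq_eval_cube => k lt_k /=; rewrite rho_expD //; lia.
  have -> : eval op (y \o rho m.+1) (cube m) = eval op y (cube m).
    by apply: eq_eval_cube => k lt_k /=; rewrite rho_small //; lia.
  exact: malcev_opxxy.
Qed.

Lemma strong_cube_term_of_malcev n : 0 < n ->
  exists q : term ar 'I_(2 ^ n - 1), strong_cube_term op q.
Proof.
move=> pos_n; have pos_N : 0 < 2 ^ n - 1 by rewrite subn_gt0 -{1}(expn0 2) ltn_exp2l.
exists (rename (insubd (Ordinal pos_N)) (cube n.-1)) => i lt_in y.
have le_i : i <= n.-1 by rewrite -ltnS prednK.
have := cube_identity y le_i; rewrite prednK // eval_rename => <-.
apply: eq_eval_cube => k; rewrite prednK // => lt_k /=.
by rewrite val_insubd lt_k.
Qed.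

End CubeFromMalcev.

Section MalcevFromCube.
Variables (F : Type) (ar : F -> nat).
Variables (A : Type) (op : forall f : F, ('I_(ar f) -> A) -> A).
Variable n : nat.

Lemma strong_cube_term_point (q : term ar 'I_(2 ^ n - 1)) i x z (e : 'I_(2 ^ n - 1) -> A) :
  strong_cube_term op q -> i < n ->
  (forall k, e k = if val k == 2 ^ n - 1 - 2 ^ i then z else x) -> eval op e q = z.
Proof.
move=> cube_q lt_in eE.
have := cube_q i lt_in (fun j => if j == 2 ^ n - 1 - 2 ^ i then z else x).
rewrite rho_top // eqxx => <-; apply: eq_eval => k /=.
by rewrite eE rho_eq_top_sub.
Qed.

Hypothesis ge2_n : 2 <= n.

Definition malcev_of_cube (q : term ar 'I_(2 ^ n - 1)) : term ar 'I_3 :=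
  rename (fun k : 'I_(2 ^ n - 1) =>
    if val k == 2 ^ n - 3 then ord0 else if val k == 2 ^ n - 2 then ord_max
    else Ordinal (isT : 1 < 3)) q.

Lemma malcev_of_cubeP q : strong_cube_term op q -> malcev_term op (malcev_of_cube q).
Proof.
move=> cube_q x z; have ge4_n : 4 <= 2 ^ n by rewrite (@leq_exp2l 2 2 n).
rewrite !eval_rename; split.
- apply: (strong_cube_term_point (x := x) cube_q (ltnW ge2_n)) => k /=.
  rewrite expn0 -subnDA; case: ifP => [/eqP -> | _] /=; last by case: ifP.
  by rewrite ifN_eq //; lia.
- apply: (strong_cube_term_point (x := x) cube_q ge2_n) => k /=.
  by rewrite expn1 -subnDA; case: ifP => //; case: ifP.
Qed.

End MalcevFromCube.

Theorem mainTheorem8 (F : Type) (ar : F -> nat) (A : Type)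
    (op : forall f : F, ('I_(ar f) -> A) -> A) (n : nat) :
  2 <= n ->
  ((exists q : term ar 'I_(2 ^ n - 1), strong_cube_term op q) <->
   (exists q : term ar 'I_3, malcev_term op q)).
Proof.
move=> ge2_n; split=> [[q cube_q] | [p malcev_p]].
  by exists (malcev_of_cube q); apply: malcev_of_cubeP.
exact: strong_cube_term_of_malcev (ltnW ge2_n).
Qed.
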